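(* Let $k\ge1$, $a_0,a_1,\dots,a_m\in\mathbb{R}^{2k}$, and let $p(x)=a_m\circledast x^m+a_{m-1}\circledast x^{m-1}+\dots+a_1\circledast x+a_0$ for $x\in\mathbb{R}^{2k}$, where $x^j$ denotes the $j$-fold $\circledast$-product of $x$ with itself. Writing $p=[p_1,\dots,p_{2k}]$, each component $p_j$ is a harmonic polynomial on $\mathbb{R}^{2k}$, i.e. a real polynomial in $x_1,\dots,x_{2k}$ with $\sum_{i=1}^{2k}\partial^2p_j/\partial x_i^2=0$.
   Context: Let $n=2k$ and let $\mathfrak g$ be the real $n\times n$ matrix with $\mathfrak g_{i,i+1}=1$ ($1\le i\le n-1$), $\mathfrak g_{n,1}=-1$, other entries $0$. For $u\in\mathbb{R}^n$ set $\varsigma(u)=\sum_{\ell=1}^n u_\ell\mathfrak g^{\ell-1}$ and $u\circledast v=\varsigma^{-1}(\varsigma(u)\varsigma(v))$; this is a commutative associative algebra with identity $e_1$. *)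

From HB Require Import structures.
From mathcomp Require Import all_boot all_order all_algebra.
From mathcomp Require Import mpoly.
Set Implicit Arguments. Unset Strict Implicit. Unset Printing Implicit Defensive.
Import Order.TTheory GRing.Theory Num.Theory.
Local Open Scope ring_scope.

Section Circ.
Variable R : comNzRingType.
Variable n : nat.

(* the matrix g: g_{i,i+1} = 1, g_{n,1} = -1 (0-based indices here) *)
Definition gmat : 'M[R]_n :=
  \matrix_(i, j) (if (j : nat) == (i : nat).+1 then 1
                  else if ((i : nat) == n.-1) && ((j : nat) == 0%N) then -1 else 0).

Definition gpow (l : nat) : 'M[R]_n := iter l (mulmx gmat) 1%:M.

Definition vsig (u : 'rV[R]_n) : 'M[R]_n := \sum_(l < n) u 0 l *: gpow l.

Definition e1 : 'rV[R]_n := \row_j (if (j : nat) == 0%N then 1 else 0).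

(* varsigma^{-1}: varsigma(u) has first row u, so on the image of varsigma
   the inverse is "take the first row", i.e. M |-> e_1 M. *)
Definition vsig_inv (M : 'M[R]_n) : 'rV[R]_n := e1 *m M.

Definition circ (u v : 'rV[R]_n) : 'rV[R]_n := vsig_inv (vsig u *m vsig v).

Definition cpow (x : 'rV[R]_n) (j : nat) : 'rV[R]_n := iter j (circ x) e1.

Definition cpoly (m : nat) (a : 'I_m.+1 -> 'rV[R]_n) (x : 'rV[R]_n) : 'rV[R]_n :=
  \sum_(i < m.+1) circ (a i) (cpow x i).

Definition mlaplacian (P : {mpoly R[n]}) : {mpoly R[n]} :=
  \sum_(i < n) (P^`M(i))^`M(i).

Definition harmonic_poly (f : 'rV[R]_n -> R) : Prop :=
  exists P : {mpoly R[n]},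
    (forall x : 'rV[R]_n, f x = P.@[fun i => x 0 i]) /\ mlaplacian P = 0.
End Circ.

(* Through [vsig], the product [circ] is the product of polynomials in [g],
   so [cpoly a x] is the first row of [sum_i vsig (a i) * V ^ i] with
   [V = vsig x = sum_l x_l g^l].  Everything commutes with [g] and
   [d V / d x_l = g^l] is constant, hence the Laplacian of [V ^ i] is
   [i (i - 1) V ^ (i - 2) sum_l g^(2 l)].  Since [g^n = -1] with [n = 2 k],
   the term [g^(2 (l + k)) = g^(2 l) g^n] cancels [g^(2 l)], so the Laplacian
   vanishes. *)
From HB Require Import structures.
From mathcomp Require Import all_boot all_order all_algebra.
From mathcomp Require Import mpoly.
Set Implicit Arguments. Unset Strict Implicit. Unset Printing Implicit Defensive.
Import Order.TTheory GRing.Theory Num.Theory.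
Local Open Scope ring_scope.

Section MxPow.
Variables (T : pzRingType) (n : nat).
Implicit Types A B : 'M[T]_n.

Definition mxpow A (j : nat) : 'M[T]_n := iter j (mulmx A) 1%:M.

Lemma mxpow0 A : mxpow A 0 = 1%:M. Proof. by []. Qed.

Lemma mxpowS A j : mxpow A j.+1 = A *m mxpow A j. Proof. by []. Qed.

Lemma mxpowD A i j : mxpow A (i + j) = mxpow A i *m mxpow A j.
Proof.
elim: i => [|i IH]; first by rewrite add0n mul1mx.
by rewrite addSn !mxpowS IH mulmxA.
Qed.

Lemma mxpow_comm A B : B *m A = A *m B -> forall j, B *m mxpow A j = mxpow A j *m B.
Proof.
move=> AB; elim=> [|j IH]; first by rewrite mulmx1 mul1mx.
by rewrite mxpowS mulmxA AB -mulmxA IH mulmxA.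
Qed.

Lemma mxpowC A j : A *m mxpow A j = mxpow A j *m A.
Proof. exact: mxpow_comm. Qed.

Lemma mxpowSr A j : mxpow A j.+1 = mxpow A j *m A.
Proof. exact: mxpowC. Qed.

End MxPow.

Lemma map_mxpow (T U : pzRingType) n (f : {rmorphism T -> U}) (A : 'M[T]_n) j :
  map_mx f (mxpow A j) = mxpow (map_mx f A) j.
Proof.
elim: j => [|j IH]; first by rewrite map_mx1.
by rewrite !mxpowS map_mxM IH.
Qed.

Section Circulant.
Variables (T : comNzRingType) (n : nat).
Local Notation g := (gmat T n).
Local Notation e_1 := (e1 T n).
Implicit Types u v x : 'rV[T]_n.

Lemma gpowE l : gpow T n l = mxpow g l. Proof. by []. Qed.

Lemma e1_gpow l (lt_l_n : (l < n)%N) : e_1 *m gpow T n l = delta_mx 0 (Ordinal lt_l_n).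
Proof.
elim: l lt_l_n => [|l IH] lt_l_n.
  by rewrite gpowE mxpow0 mulmx1; apply/rowP => -[[|j] ?]; rewrite !mxE.
rewrite gpowE mxpowSr mulmxA -gpowE (IH (ltnW lt_l_n)) -rowE.
apply/rowP => j; rewrite !mxE /= (@ltn_eqF l n.-1) ?ltn_predRL //.
by rewrite andFb -val_eqE /=; case: eqP.
Qed.

Lemma delta_e1_gpow (i : 'I_n) : delta_mx 0 i = e_1 *m gpow T n i.
Proof. by rewrite (e1_gpow (ltn_ord i)); congr delta_mx; apply: val_inj. Qed.

Lemma gmat_vsigC u : g *m vsig u = vsig u *m g.
Proof.
rewrite /vsig mulmx_sumr mulmx_suml; apply: eq_bigr => l _.
by rewrite -scalemxAr -scalemxAl gpowE mxpowC.
Qed.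

Lemma gpow_vsigC l u : gpow T n l *m vsig u = vsig u *m gpow T n l.
Proof. by rewrite gpowE -mxpow_comm // gmat_vsigC. Qed.

Lemma e1_vsig u : e_1 *m vsig u = u.
Proof.
rewrite /vsig mulmx_sumr [RHS]row_sum_delta; apply: eq_bigr => l _.
by rewrite -scalemxAr delta_e1_gpow.
Qed.

Lemma vsig_e1K (M : 'M[T]_n) : g *m M = M *m g -> vsig (e_1 *m M) = M.
Proof.
move=> gM; apply/row_matrixP => i; rewrite !rowE delta_e1_gpow -!mulmxA.
by rewrite gpow_vsigC mulmxA e1_vsig gpowE -(mxpow_comm (esym gM)) mulmxA.
Qed.

Lemma vsig_circ u v : vsig (circ u v) = vsig u *m vsig v.
Proof. by rewrite vsig_e1K // mulmxA gmat_vsigC -mulmxA gmat_vsigC mulmxA. Qed.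

Lemma vsig_e1 : vsig e_1 = 1%:M.
Proof. by rewrite -[e_1]mulmx1 vsig_e1K // mulmx1 mul1mx. Qed.

Lemma vsig_delta (i : 'I_n) : vsig (delta_mx 0 i) = gpow T n i.
Proof. by rewrite delta_e1_gpow vsig_e1K // gpowE mxpowC. Qed.

Lemma vsig_cpow x j : vsig (cpow x j) = mxpow (vsig x) j.
Proof. by elim: j => [|j IH] /=; rewrite ?vsig_e1 // vsig_circ IH. Qed.

Lemma vsig_sum (I : Type) (r : seq I) (P : pred I) (F : I -> 'rV[T]_n) :
  vsig (\sum_(i <- r | P i) F i) = \sum_(i <- r | P i) vsig (F i).
Proof.
rewrite /vsig; under eq_bigr do rewrite summxE scaler_suml.
by rewrite exchange_big.
Qed.

Lemma cpolyE m (a : 'I_m.+1 -> 'rV[T]_n) x :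
  cpoly a x = e_1 *m \sum_(i < m.+1) vsig (a i) *m mxpow (vsig x) i.
Proof.
rewrite -[LHS]e1_vsig vsig_sum; congr (_ *m _); apply: eq_bigr => i _.
by rewrite vsig_circ vsig_cpow.
Qed.

Lemma vsigN u : vsig (- u) = - vsig u.
Proof. by rewrite /vsig -sumrN; apply: eq_bigr => l _; rewrite mxE scaleNr. Qed.

Lemma e1_gpow_n : (0 < n)%N -> e_1 *m gpow T n n = - e_1.
Proof.
move=> n_gt0; have lt_pn : (n.-1 < n)%N by rewrite prednK.
have -> : gpow T n n = gpow T n n.-1.+1 by rewrite prednK.
rewrite gpowE mxpowSr mulmxA -gpowE (e1_gpow lt_pn) -rowE.
apply/rowP => j; rewrite !mxE /= eqxx andTb prednK // ltn_eqF //.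
by case: (_ == 0)%N; rewrite ?oppr0.
Qed.

Lemma gpow_n : (0 < n)%N -> gpow T n n = - 1%:M.
Proof.
move=> n_gt0.
by rewrite -[LHS]vsig_e1K ?e1_gpow_n ?vsigN ?vsig_e1 // gpowE mxpowC.
Qed.

Lemma sum_gpow_sqr (k : nat) : n = (2 * k)%N -> (0 < k)%N ->
  \sum_(l < n) gpow T n l *m gpow T n l = 0.
Proof.
rewrite mul2n -addnn => n2k k_gt0.
have shift l : gpow T n (l + k) *m gpow T n (l + k) = - (gpow T n l *m gpow T n l).
  have n_gt0 : (0 < n)%N by rewrite n2k addn_gt0 k_gt0.
  rewrite !gpowE -!mxpowD addnACA -n2k mxpowD -!gpowE gpow_n //.
  by rewrite mulmxN mulmx1.
rewrite -(big_mkord xpredT (fun l => gpow T n l *m gpow T n l)).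
rewrite (@big_cat_nat _ _ _ k) //= ?n2k ?leq_addr // -n2k (big_addn 0 n k).
have -> : (n - k = k)%N by rewrite n2k addnK.
by under [X in _ + X]eq_bigr do rewrite shift; rewrite sumrN addrN.
Qed.

End Circulant.

Section Morphism.
Variables (T U : comNzRingType) (n : nat) (f : {rmorphism T -> U}).

Lemma map_gmat : map_mx f (gmat T n) = gmat U n.
Proof.
apply/matrixP => i j; rewrite !mxE.
by case: ifP => _; rewrite ?rmorph1 //; case: ifP; rewrite ?rmorphN1 ?rmorph0.
Qed.

Lemma map_gpow l : map_mx f (gpow T n l) = gpow U n l.
Proof. by rewrite !gpowE map_mxpow map_gmat. Qed.

Lemma map_vsig (u : 'rV[T]_n) : map_mx f (vsig u) = vsig (map_mx f u).
Proof.
rewrite /vsig map_mx_sum; apply: eq_bigr => l _.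
by rewrite map_mxZ map_gpow mxE.
Qed.

End Morphism.

Section PolynomialMatrices.
Variables (T : comNzRingType) (n : nat).
Local Notation S := {mpoly T[n]}.
Local Notation C := (map_mx (@mpolyC n T)).
Local Notation dmx i := (map_mx (mderiv i)).

Lemma dmxM i p q r (A : 'M[S]_(p, q)) (B : 'M[S]_(q, r)) :
  dmx i (A *m B) = dmx i A *m B + A *m dmx i B.
Proof.
apply/matrixP => a b; rewrite !mxE raddf_sum -big_split; apply: eq_bigr => l _.
by rewrite !mxE; apply: mderivM.
Qed.

Lemma dmxZ i p q (c : S) (A : 'M[S]_(p, q)) :
  dmx i (c *: A) = mderiv i c *: A + c *: dmx i A.
Proof. by apply/matrixP => a b; rewrite !mxE mderivM. Qed.

Lemma dmxC i p q (M : 'M[T]_(p, q)) : dmx i (C M) = 0.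
Proof. by apply/matrixP => a b; rewrite !mxE mderivC. Qed.

Lemma dmx_mulCl i p q r (M : 'M[T]_(p, q)) (B : 'M[S]_(q, r)) :
  dmx i (C M *m B) = C M *m dmx i B.
Proof. by rewrite dmxM dmxC mul0mx add0r. Qed.

Lemma dmx_gpow i l : dmx i (gpow S n l) = 0.
Proof. by rewrite -(map_gpow n (@mpolyC n T)) dmxC. Qed.

Lemma dmx_vsig i (u : 'rV[S]_n) : dmx i (vsig u) = vsig (dmx i u).
Proof.
rewrite /vsig map_mx_sum; apply: eq_bigr => l _.
by rewrite dmxZ dmx_gpow scaler0 addr0 mxE.
Qed.

Lemma dmx_mxpow i (V W : 'M[S]_n) : dmx i V = W -> W *m V = V *m W ->
  forall j, dmx i (mxpow V j) = j%:R *: (mxpow V j.-1 *m W).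
Proof.
move=> dV WV; elim=> [|j IH].
  by rewrite mxpow0 -(map_mx1 (@mpolyC n T)) dmxC scale0r.
rewrite mxpowS dmxM dV IH; case: j IH => [|j] _.
  by rewrite scale0r mulmx0 addr0 mxpow0 mul1mx mulmx1 scale1r.
rewrite !succnK -scalemxAr [V *m _]mulmxA -mxpowS (mxpow_comm WV).
by rewrite -[X in X + _]scale1r -scalerDl -mulrS.
Qed.

Lemma dmx2_mxpow i (V W : 'M[S]_n) : dmx i V = W -> W *m V = V *m W -> dmx i W = 0 ->
  forall j, dmx i (dmx i (mxpow V j)) = (j * j.-1)%:R *: (mxpow V j.-2 *m (W *m W)).
Proof.
move=> dV WV dW j; rewrite (dmx_mxpow dV WV) dmxZ -mpolyC_nat mderivC scale0r add0r.
rewrite dmxM dW mulmx0 addr0 (dmx_mxpow dV WV) -scalemxAl scalerA.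
by rewrite mpolyC_nat -natrM mulmxA.
Qed.

Definition mxlaplacian p q (A : 'M[S]_(p, q)) : 'M[S]_(p, q) :=
  \sum_(i < n) dmx i (dmx i A).

Lemma mlaplacian_mxE p q (A : 'M[S]_(p, q)) a b :
  mlaplacian (A a b) = mxlaplacian A a b.
Proof. by rewrite summxE; apply: eq_bigr => i _; rewrite !mxE. Qed.

Lemma mxlaplacian_mulCl p q r (M : 'M[T]_(p, q)) (B : 'M[S]_(q, r)) :
  mxlaplacian (C M *m B) = C M *m mxlaplacian B.
Proof.
by rewrite /mxlaplacian mulmx_sumr; apply: eq_bigr => i _; rewrite !dmx_mulCl.
Qed.

Lemma mxlaplacian_sum p q (I : Type) (r : seq I) (F : I -> 'M[S]_(p, q)) :
  mxlaplacian (\sum_(l <- r) F l) = \sum_(l <- r) mxlaplacian (F l).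
Proof.
rewrite /mxlaplacian exchange_big; apply: eq_bigr => i _.
by rewrite !map_mx_sum.
Qed.

Definition Xrow : 'rV[S]_n := \row_l 'X_l.

Lemma dmx_Xrow i : dmx i Xrow = delta_mx 0 i.
Proof.
apply/rowP => l; rewrite !mxE mderivX mnm1E.
case: eqP => [->|_]; last by rewrite scale0r.
have -> : (U_(i) - U_(i))%MM = 0%MM by apply/mnmP => t; rewrite mnmBE mnm0E subnn.
by rewrite mpolyX0 scale1r.
Qed.

Lemma mxlaplacian_mxpow_vsigX j :
  mxlaplacian (mxpow (vsig Xrow) j) =
  (j * j.-1)%:R *: (mxpow (vsig Xrow) j.-2 *m \sum_(l < n) gpow S n l *m gpow S n l).
Proof.
rewrite /mxlaplacian mulmx_sumr scaler_sumr; apply: eq_bigr => i _.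
apply: dmx2_mxpow; last exact: dmx_gpow; last exact: gpow_vsigC.
by rewrite dmx_vsig dmx_Xrow vsig_delta.
Qed.

Definition cpoly_mx m (a : 'I_m.+1 -> 'rV[T]_n) : 'rV[S]_n :=
  C (e1 T n) *m \sum_(i < m.+1) C (vsig (a i)) *m mxpow (vsig Xrow) i.

Lemma meval_mxC (v : 'I_n -> T) p q (M : 'M[T]_(p, q)) : map_mx (meval v) (C M) = M.
Proof. by apply/matrixP => a b; rewrite !mxE mevalC. Qed.

Lemma meval_cpoly_mx m (a : 'I_m.+1 -> 'rV[T]_n) (x : 'rV[T]_n) :
  map_mx (meval (fun i => x 0 i)) (cpoly_mx a) = cpoly a x.
Proof.
rewrite map_mxM meval_mxC cpolyE map_mx_sum; congr (_ *m _); apply: eq_bigr => i _.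
rewrite map_mxM meval_mxC map_mxpow map_vsig; congr (_ *m mxpow (vsig _) _).
by apply/rowP => l; rewrite !mxE; apply: mevalXU.
Qed.

Lemma mxlaplacian_cpoly_mx m (a : 'I_m.+1 -> 'rV[T]_n) k :
  n = (2 * k)%N -> (0 < k)%N -> mxlaplacian (cpoly_mx a) = 0.
Proof.
move=> n2k k_gt0; rewrite mxlaplacian_mulCl mxlaplacian_sum big1 ?mulmx0 // => i _.
rewrite mxlaplacian_mulCl mxlaplacian_mxpow_vsigX (sum_gpow_sqr _ n2k k_gt0).
by rewrite !(mulmx0, scaler0).
Qed.

End PolynomialMatrices.

Theorem mainTheorem10 (R : realFieldType) (k : nat) (hk : (1 <= k)%N)
    (m : nat) (a : 'I_m.+1 -> 'rV[R]_(2 * k)) :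
  forall j : 'I_(2 * k), harmonic_poly (fun x => cpoly a x 0 j).
Proof.
move=> j; exists (cpoly_mx a 0 j); split.
  by move=> x; rewrite -meval_cpoly_mx mxE.
by rewrite mlaplacian_mxE (mxlaplacian_cpoly_mx a (erefl (2 * k)%N) hk) mxE.
Qed.
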